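(* Let $f\in\mathbb R[x_1,\dots,x_n]$ be a circuit polynomial $f(x)=\sum_{j=0}^r f_{\alpha(j)}x^{\alpha(j)}+f_{\alpha^\star}x^{\alpha^\star}$ satisfying condition (C3). Then $r\in\{n-1,n\}$. If $r=n$, then $f$ is gem regular (i.e. $D(f)=\emptyset$). If $r=n-1$, then $f$ is gem irregular with $D(f)=\{\alpha^\star\}$, and $\{\alpha(0),\dots,\alpha(n-1)\}=\{2k_1e_1,\dots,2k_ne_n\}$ for some $k_i\in\mathbb N$.
   Context: A circuit polynomial is $f(x)=\sum_{j=0}^r f_{\alpha(j)}x^{\alpha(j)}+f_{\alpha^\star}x^{\alpha^\star}$ (with $f_{\alpha^\star}\ne0$) such that: $r\le n$; $\alpha(j)\in 2\mathbb N_0^n$ and $f_{\alpha(j)}>0$ for all $j$; the vertex set of the Newton polytope $\mathrm{conv}(A(f))$ is exactly $\{\alpha(0),\dots,\alpha(r)\}$ and these points are affinely independent; and $\alpha^\star=\sum_{j=0}^r\lambda_j\alpha(j)$ uniquely with all $\lambda_j>0$, $\sum_j\lambda_j=1$. Here $A(f)$ is the set of exponents with nonzero coefficient. $\mathrm{New}_\infty(f)=\mathrm{conv}(A(f)\cup\{0\})$, $V_0(f)$ is its vertex set, $V(f)=V_0(f)\setminus\{0\}$, $V^c(f)=A(f)\setminus V(f)$. Condition (C3): for every $i\in\{1,\dots,n\}$, $V(f)$ contains a vector $2k_ie_i$ with $k_i\in\mathbb N$. Let $\mathcal G(f)$ be the set of nonempty faces $G$ of $\mathrm{New}_\infty(f)$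 with $0\notin G$. An exponent $\alpha\in A(f)$ is gem degenerate if $\alpha\in V^c(f)\cap G$ for some $G\in\mathcal G(f)$; $D(f)$ is the set of gem degenerate exponents; $f$ is gem regular if $D(f)=\emptyset$ and gem irregular otherwise. *)

From HB Require Import structures.
From mathcomp Require Import all_boot all_order all_algebra.
Set Implicit Arguments. Unset Strict Implicit. Unset Printing Implicit Defensive.
Import Order.TTheory GRing.Theory Num.Theory.
Local Open Scope ring_scope.

Definition expo (n : nat) := {ffun 'I_n -> nat}.

(* A real polynomial in n variables is represented by its coefficient
   function: f a = coefficient of x^a. *)
Definition mpoly (R : realFieldType) (n : nat) := expo n -> R.

Definition pt (R : realFieldType) (n : nat) (a : expo n) : 'rV[R]_n :=
  \row_i ((a i)%:R).

Definition dot (R : realFieldType) (n : nat) (c x : 'rV[R]_n) : R :=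
  \sum_i c ord0 i * x ord0 i.

Definition conv (R : realFieldType) (n : nat) (P : 'rV[R]_n -> Prop)
    (x : 'rV[R]_n) : Prop :=
  exists (m : nat) (p : 'I_m -> 'rV[R]_n) (l : 'I_m -> R),
    (forall i, P (p i)) /\ (forall i, 0 <= l i) /\ \sum_i l i = 1 /\
    x = \sum_i l i *: p i.

(* G is a face of the convex set Q (faces of polytopes are exposed faces;
   the empty face and Q itself are included). *)
Definition is_face (R : realFieldType) (n : nat) (Q G : 'rV[R]_n -> Prop) : Prop :=
  exists (c : 'rV[R]_n) (d : R),
    (forall x, Q x -> dot c x <= d) /\
    (forall x, G x <-> (Q x /\ dot c x = d)).

Definition is_vertex (R : realFieldType) (n : nat) (Q : 'rV[R]_n -> Prop)
    (v : 'rV[R]_n) : Prop :=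
  is_face Q (fun x => x = v).

Definition Apts (R : realFieldType) (n : nat) (f : mpoly R n) (x : 'rV[R]_n) : Prop :=
  exists a, f a != 0 /\ x = pt R a.

Definition is_circuit (R : realFieldType) (n r : nat) (f : mpoly R n)
    (al : 'I_r.+1 -> expo n) (ast : expo n) : Prop :=
  (r <= n)%N /\
  (forall j, (forall i, ~~ odd (al j i)) /\ 0 < f (al j)) /\
  f ast != 0 /\
  (forall j, ast != al j) /\
  (* f = sum_j f_{alpha(j)} x^{alpha(j)} + f_{alpha*} x^{alpha*}, i.e. A(f) *)
  (forall a, f a != 0 <-> (a = ast \/ exists j, a = al j)) /\
  (forall x, is_vertex (conv (Apts f)) x <-> exists j, x = pt R (al j)) /\
  (forall mu : 'I_r.+1 -> R, \sum_j mu j = 0 ->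
     \sum_j mu j *: pt R (al j) = 0 -> forall j, mu j = 0) /\
  (exists lam : 'I_r.+1 -> R,
     (forall j, 0 < lam j) /\ \sum_j lam j = 1 /\
     pt R ast = \sum_j lam j *: pt R (al j) /\
     (forall lam' : 'I_r.+1 -> R, \sum_j lam' j = 1 ->
        pt R ast = \sum_j lam' j *: pt R (al j) -> lam' = lam)).

Definition Newinf (R : realFieldType) (n : nat) (f : mpoly R n) : 'rV[R]_n -> Prop :=
  conv (fun x => Apts f x \/ x = 0).

Definition inV (R : realFieldType) (n : nat) (f : mpoly R n) (a : expo n) : Prop :=
  is_vertex (Newinf f) (pt R a) /\ pt R a != 0.

Definition inVc (R : realFieldType) (n : nat) (f : mpoly R n) (a : expo n) : Prop :=
  f a != 0 /\ ~ inV f a.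

Definition unit_expo (n : nat) (m : nat) (i : 'I_n) : expo n :=
  [ffun j => if j == i then m else 0%N].

Definition C3 (R : realFieldType) (n : nat) (f : mpoly R n) : Prop :=
  forall i : 'I_n, exists k : nat, (0 < k)%N /\ inV f (unit_expo (2 * k) i).

Definition in_calG (R : realFieldType) (n : nat) (f : mpoly R n)
    (G : 'rV[R]_n -> Prop) : Prop :=
  is_face (Newinf f) G /\ (exists x, G x) /\ ~ G 0.

Definition gem_degenerate (R : realFieldType) (n : nat) (f : mpoly R n)
    (a : expo n) : Prop :=
  inVc f a /\ exists G, in_calG f G /\ G (pt R a).

Definition gem_regular (R : realFieldType) (n : nat) (f : mpoly R n) : Prop :=
  forall a, ~ gem_degenerate f a.

From HB Require Import structures.
From mathcomp Require Import all_boot all_order all_algebra.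
From mathcomp Require Import zify.

(* By (C3) each axis vertex 2k_i e_i of New_oo(f) lies in A(f); it is not
   alpha*, which lies in the relative interior of the simplex spanned by the
   alpha(j), so it is some alpha(s i) with s injective, whence n <= r + 1.
   Let c' be the linear functional x |-> sum_i x_i / (2 k_i), which is 1 on
   the axis points.  If r = n - 1, every alpha(j) is an axis point, c' <= 1 on
   New_oo(f), and the face {c' = 1} contains alpha* but not 0; every other
   exponent is a vertex.  If r = n, exactly one alpha(j0) is not an axis
   point and affine independence gives c'(alpha(j0)) <> 1.  A face through
   alpha* contains every alpha(j), so its functional is a multiple of c' and
   would force c'(alpha(j0)) = 1; a face through alpha(j0) missing 0 forces
   c'(alpha(j0)) >= 1, hence > 1, and then c' exposes alpha(j0) as a vertex. *)
Set Implicit Arguments. Unset Strict Implicit. Unset Printing Implicit Defensive.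
Import Order.TTheory GRing.Theory Num.Theory.
Local Open Scope ring_scope.

Section Convexity.
Variables (R : realFieldType) (n : nat).
Implicit Types (P : 'rV[R]_n -> Prop) (c x v : 'rV[R]_n) (d : R).

Lemma dot_sumr m c (l : 'I_m -> R) (p : 'I_m -> 'rV[R]_n) :
  dot c (\sum_i l i *: p i) = \sum_i l i * dot c (p i).
Proof.
rewrite /dot; under eq_bigr => k _ do rewrite summxE mulr_sumr.
rewrite exchange_big; apply: eq_bigr => i _; rewrite mulr_sumr.
by apply: eq_bigr => k _; rewrite mxE mulrCA.
Qed.

Lemma dot0r c : dot c 0 = 0.
Proof. by rewrite /dot big1 // => i _; rewrite mxE mulr0. Qed.

Lemma conv_gen P x : P x -> conv P x.
Proof.
move=> Px; exists 1%N, (fun _ => x), (fun _ => 1).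
by rewrite !big_ord1 scale1r; split=> // _; exact: ler01.
Qed.

Lemma conv_dot_le P c d x :
  (forall y, P y -> dot c y <= d) -> conv P x -> dot c x <= d.
Proof.
move=> Pd [m [p [l [Pp [l_ge0 [l1 ->]]]]]]; rewrite dot_sumr.
rewrite -[d]mul1r -l1 mulr_suml; apply: ler_sum => i _.
by rewrite ler_wpM2l ?Pd.
Qed.

Lemma conv_dot_eq P c d m (l : 'I_m -> R) (p : 'I_m -> 'rV[R]_n) :
  (forall y, P y -> dot c y <= d) -> (forall i, P (p i)) ->
  (forall i, 0 <= l i) -> \sum_i l i = 1 ->
  dot c (\sum_i l i *: p i) = d -> forall i, 0 < l i -> dot c (p i) = d.
Proof.
move=> Pd Pp l_ge0 l1; rewrite dot_sumr => Ed i l_gt0.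
have gap_ge0 j : 0 <= l j * (d - dot c (p j)).
  by rewrite mulr_ge0 // subr_ge0 Pd.
have : \sum_j l j * (d - dot c (p j)) = 0.
  under eq_bigr => j _ do rewrite mulrBr.
  by rewrite sumrB -mulr_suml l1 mul1r Ed subrr.
move/psumr_eq0P => /(_ (fun j _ => gap_ge0 j) i isT) /eqP.
by rewrite mulf_eq0 gt_eqF //= subr_eq0 => /eqP.
Qed.

Lemma conv_weight_pos m (l : 'I_m -> R) :
  (forall i, 0 <= l i) -> \sum_i l i = 1 -> exists i, 0 < l i.
Proof.
move=> l_ge0 l1; case: (pickP (fun i => 0 < l i)) => [i|l_le0]; first by exists i.
suff : \sum_i l i = 0 by rewrite l1 => /eqP; rewrite oner_eq0.
by apply: big1 => i _; apply/eqP; rewrite eq_le l_ge0 andbT leNgt l_le0.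
Qed.

Lemma vertex_conv_gen P v : is_vertex (conv P) v -> P v.
Proof.
case=> c [d [Pd Fv]]; have [[m [p [l [Pp [l_ge0 [l1 Ev]]]]]] vd] := (Fv v).1 erefl.
have [i l_gt0] := conv_weight_pos l_ge0 l1.
have pid : dot c (p i) = d.
  apply: (conv_dot_eq (P := conv P)) l_gt0 => //; last by rewrite -Ev.
  by move=> j; apply: conv_gen.
by rewrite -((Fv (p i)).2 (conj (conv_gen (Pp i)) pid)).
Qed.

Lemma face_conv_level P c d : (forall y, P y -> dot c y <= d) ->
  is_face (conv P) (fun x => conv P x /\ dot c x = d).
Proof. by move=> Pd; exists c, d; split=> // x; apply: conv_dot_le. Qed.

Lemma vertex_conv_unique P c d v : P v -> dot c v = d ->
  (forall y, P y -> dot c y <= d) ->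
  (forall y, P y -> dot c y = d -> y = v) -> is_vertex (conv P) v.
Proof.
move=> Pv vd Pd Pdv; exists c, d; split=> [x|x]; first exact: conv_dot_le.
split=> [->|[[m [p [l [Pp [l_ge0 [l1 Ex]]]]]] Exd]].
  by split; first apply: conv_gen.
have pv i : l i *: p i = l i *: v.
  have := l_ge0 i; rewrite le_eqVlt => /orP[/eqP <-|l_gt0]; first by rewrite !scale0r.
  by rewrite (Pdv (p i)) // (conv_dot_eq Pd Pp l_ge0 l1 _ l_gt0) // -Ex.
by rewrite Ex (eq_bigr (fun i => l i *: v)) // -scaler_suml l1 scale1r.
Qed.

End Convexity.

Section Exponents.
Variables (R : realFieldType) (n : nat).
Implicit Types (c : 'rV[R]_n) (a : expo n) (d : R).

Lemma pt_inj : injective (@pt R n).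
Proof.
move=> a b /matrixP eab; apply/ffunP => i.
by move: (eab ord0 i); rewrite !mxE => /eqP; rewrite eqr_nat => /eqP.
Qed.

Lemma dot_pt_unit_expo c k i : dot c (pt R (unit_expo k i)) = c ord0 i * k%:R.
Proof.
rewrite /dot (bigD1 i) //= !mxE ffunE eqxx big1 ?addr0 // => j /negPf ji.
by rewrite mxE ffunE ji mulr0.
Qed.

Definition axis_dual (m : 'I_n -> nat) : 'rV[R]_n := \row_i ((m i)%:R)^-1.

Variable m : 'I_n -> nat.
Hypothesis m_gt0 : forall i, (0 < m i)%N.

Lemma pt_axes_decomp a :
  pt R a = \sum_i ((a i)%:R / (m i)%:R) *: pt R (unit_expo (m i) i).
Proof.
apply/rowP => j; rewrite summxE (bigD1 j) //= big1 ?addr0 => [|i ij].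
  by rewrite !mxE ffunE eqxx divfK // pnatr_eq0 -lt0n.
by rewrite !mxE ffunE eq_sym (negbTE ij) mulr0.
Qed.

Lemma dot_pt_axes c a : dot c (pt R a) =
  \sum_i dot c (pt R (unit_expo (m i) i)) * ((a i)%:R / (m i)%:R).
Proof. by rewrite {1}pt_axes_decomp dot_sumr; apply: eq_bigr => i _; rewrite mulrC. Qed.

Lemma dot_axis_dual_unit i : dot (axis_dual m) (pt R (unit_expo (m i) i)) = 1.
Proof. by rewrite dot_pt_unit_expo mxE mulVf // pnatr_eq0 -lt0n. Qed.

Lemma dot_pt_axes_le c d a : (forall i, dot c (pt R (unit_expo (m i) i)) <= d) ->
  dot c (pt R a) <= d * dot (axis_dual m) (pt R a).
Proof.
move=> cd; rewrite (dot_pt_axes c) (dot_pt_axes (axis_dual m)) mulr_sumr.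
apply: ler_sum => i _; rewrite dot_axis_dual_unit mul1r.
by rewrite ler_wpM2r // divr_ge0 // ler0n.
Qed.

Lemma dot_pt_axes_eq c d a : (forall i, dot c (pt R (unit_expo (m i) i)) = d) ->
  dot c (pt R a) = d * dot (axis_dual m) (pt R a).
Proof.
move=> cd; rewrite (dot_pt_axes c) (dot_pt_axes (axis_dual m)) mulr_sumr.
by apply: eq_bigr => i _; rewrite dot_axis_dual_unit mul1r cd.
Qed.

End Exponents.

Lemma affine_indep_codom (R : nzRingType) (V : lmodType R) r n
    (q : 'I_r -> V) (s : 'I_n -> 'I_r) (t : 'I_n -> R) j :
  (forall mu : 'I_r -> R, \sum_j mu j = 0 -> \sum_j mu j *: q j = 0 ->
     forall j, mu j = 0) ->
  j \notin codom s -> \sum_i t i = 1 -> q j != \sum_i t i *: q (s i).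
Proof.
move=> indep js t1; apply/eqP => qj.
pose mu j' := (j' == j)%:R - \sum_(i | s i == j') t i.
have mu_sum : \sum_j' mu j' = 0.
  rewrite sumrB; have -> : \sum_j' \sum_(i | s i == j') t i = \sum_i t i.
    by rewrite (partition_big s xpredT).
  rewrite (bigD1 j) //= eqxx big1 => [|k /negPf ->//].
  by rewrite addr0 t1 subrr.
have mu_comb : \sum_j' mu j' *: q j' = q j - \sum_i t i *: q (s i).
  under eq_bigr => j' _ do rewrite scalerBl scaler_suml.
  rewrite sumrB (bigD1 j) //= eqxx scale1r big1 ?addr0 => [|k /negPf ->]; last first.
    by rewrite scale0r.
  congr (_ - _); rewrite (partition_big s xpredT) //=.
  by apply: eq_bigr => j' _; apply: eq_bigr => i /eqP ->.
rewrite qj subrr in mu_comb.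
have := indep mu mu_sum mu_comb j; rewrite /mu eqxx big_pred0 ?subr0 => [/eqP|i].
  by rewrite oner_eq0.
by apply: contraNF js => /eqP <-; exact: codom_f.
Qed.

Lemma codom_inj_compl1 (T T' : finType) (s : T -> T') j j' :
  injective s -> #|T'| = #|T|.+1 -> j \notin codom s -> j' != j -> j' \in codom s.
Proof.
move=> s_inj cardT js j'j.
have card_eq : #|codom s| = #|predC1 j| by rewrite card_codom // cardC1 cardT.
have /(subset_cardP card_eq) codom_eq : codom s \subset predC1 j.
  apply/subsetP => _ /codomP [x ->]; rewrite !inE.
  by apply: contraNneq js => <-; exact: codom_f.
by rewrite codom_eq !inE.
Qed.

Lemma exists_notin_codom (T T' : finType) (s : T -> T') :
  (#|T| < #|T'|)%N -> exists j, j \notin codom s.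
Proof.
move=> lt_card; case: (pickP (predC (mem (codom s)))) => [j js|all_in].
  by exists j.
suff : (#|T'| <= #|T|)%N by rewrite leqNgt lt_card.
apply: leq_trans (leq_image_card s T); apply: subset_leq_card.
by apply/subsetP => y _; move/negbFE: (all_in y).
Qed.

Definition newton_gen (R : realFieldType) n (f : mpoly R n) (x : 'rV[R]_n) : Prop :=
  Apts f x \/ x = 0.

Lemma gem_degenerate_level (R : realFieldType) n (f : mpoly R n) a :
  gem_degenerate f a -> exists c d,
  [/\ forall y, newton_gen f y -> dot c y <= d, 0 < d & dot c (pt R a) = d].
Proof.
move=> [_ [G [[[c [d [N_d FG]]] [_ G0]] Ga]]]; exists c, d.
have gen_d y : newton_gen f y -> dot c y <= d by move=> ?; apply/N_d/conv_gen.
have d_ge0 : 0 <= d by rewrite -(dot0r c); apply: gen_d; right.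
split=> //; last exact: ((FG _).1 Ga).2.
rewrite lt_def d_ge0 andbT; apply/eqP => d0; apply: G0; apply/FG.
by split; [apply: conv_gen; right | rewrite dot0r].
Qed.

Section Circuit.
Variables (R : realFieldType) (n r : nat) (f : mpoly R n).
Variables (al : 'I_r.+1 -> expo n) (ast : expo n).
Hypothesis circ : is_circuit f al ast.
Implicit Types (c : 'rV[R]_n) (d : R) (a : expo n).

Lemma circuit_le : (r <= n)%N.
Proof. by case: circ. Qed.

Lemma circuit_al_neq0 j : f (al j) != 0.
Proof. by case: circ => _ [/(_ j) [_ /gt_eqF ->]]. Qed.

Lemma circuit_ast_neq0 : f ast != 0.
Proof. by case: circ => _ [_ []]. Qed.

Lemma circuit_supp a : f a != 0 -> a = ast \/ exists j, a = al j.
Proof. by case: circ => _ [_ [_ [_ [/(_ a) [+ _]]]]]. Qed.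

Lemma circuit_weights : exists lam : 'I_r.+1 -> R,
  [/\ forall j, 0 < lam j, \sum_j lam j = 1 & pt R ast = \sum_j lam j *: pt R (al j)].
Proof. by case: circ => _ [_ [_ [_ [_ [_ [_ [lam [? [? [? _]]]]]]]]]]; exists lam. Qed.

Lemma newton_gen_al j : newton_gen f (pt R (al j)).
Proof. by left; exists (al j); split; first exact: circuit_al_neq0. Qed.

Lemma newton_gen_ast : newton_gen f (pt R ast).
Proof. by left; exists ast; split; first exact: circuit_ast_neq0. Qed.

Lemma ast_dot_le c d : (forall j, dot c (pt R (al j)) <= d) -> dot c (pt R ast) <= d.
Proof.
move=> al_d; have [lam [lam_gt0 lam1 ->]] := circuit_weights.
rewrite dot_sumr -[d]mul1r -lam1 mulr_suml; apply: ler_sum => j _.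
by apply: ler_wpM2l; [exact: ltW | exact: al_d].
Qed.

Lemma ast_dot_eq c d : (forall j, dot c (pt R (al j)) = d) -> dot c (pt R ast) = d.
Proof.
move=> al_d; have [lam [_ lam1 ->]] := circuit_weights.
rewrite dot_sumr -[d]mul1r -lam1 mulr_suml.
by apply: eq_bigr => j _; rewrite al_d.
Qed.

Lemma newton_gen_le c d : 0 <= d -> (forall j, dot c (pt R (al j)) <= d) ->
  forall y, newton_gen f y -> dot c y <= d.
Proof.
move=> d_ge0 al_d y [[b [fb ->]]|->]; last by rewrite dot0r.
by case: (circuit_supp fb) => [->|[j ->]]; [exact: ast_dot_le | exact: al_d].
Qed.

Lemma ast_level c d : (forall y, newton_gen f y -> dot c y <= d) ->
  dot c (pt R ast) = d -> forall j, dot c (pt R (al j)) = d.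
Proof.
move=> gen_d ast_d j; have [lam [lam_gt0 lam1 ast_comb]] := circuit_weights.
apply: (conv_dot_eq gen_d newton_gen_al _ lam1) (lam_gt0 j).
  by move=> i; exact: ltW.
by rewrite -ast_comb.
Qed.

Lemma ast_level_unique c d j : (forall y, newton_gen f y -> dot c y <= d) ->
  (forall j', dot c (pt R (al j')) = d -> j' = j) -> dot c (pt R ast) != d.
Proof.
move=> gen_d al_d; apply/eqP => ast_d.
have [lam [_ lam1 ast_comb]] := circuit_weights.
have ast_al : ast = al j.
  apply: (@pt_inj R); rewrite ast_comb (eq_bigr (fun j' => lam j' *: pt R (al j))).
    by rewrite -scaler_suml lam1 scale1r.
  by move=> j' _; rewrite (al_d j' (ast_level gen_d ast_d j')).
by case: circ => _ [_ [_ [/(_ j)]]]; rewrite ast_al eqxx.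
Qed.

Lemma ast_not_vertex : ~ is_vertex (Newinf f) (pt R ast).
Proof.
case=> c [d [N_d F]]; have [_ ast_d] := (F _).1 (erefl (pt R ast)).
have gen_d y : newton_gen f y -> dot c y <= d by move=> ?; apply/N_d/conv_gen.
suff : dot c (pt R ast) != d by rewrite ast_d eqxx.
apply: (ast_level_unique (j := ord0) gen_d) => j' al_d.
have /pt_inj al_ast := (F _).2 (conj (conv_gen (newton_gen_al j')) al_d).
by case: circ => _ [_ [_ [/(_ j')]]]; rewrite al_ast eqxx.
Qed.

Lemma alpha_vertex c d j : 0 < d -> dot c (pt R (al j)) = d ->
  (forall j', j' != j -> dot c (pt R (al j')) < d) -> inV f (al j).
Proof.
move=> d_gt0 al_d al_lt.
have al_le j' : dot c (pt R (al j')) <= d.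
  by case: (eqVneq j' j) => [->|/al_lt/ltW //]; rewrite al_d.
have al_eq j' : dot c (pt R (al j')) = d -> j' = j.
  by case: (eqVneq j' j) => // /al_lt; rewrite ltNge => /negP + Ed; rewrite Ed.
have gen_d := newton_gen_le (ltW d_gt0) al_le.
split; last by apply: contraTneq d_gt0 => e; rewrite -al_d e dot0r ltxx.
apply: (vertex_conv_unique (newton_gen_al j) al_d gen_d).
move=> y [[b [fb ->]]|-> d0]; last by move: d_gt0; rewrite -d0 dot0r ltxx.
case: (circuit_supp fb) => [->|[j' ->] /al_eq -> //] ast_d.
by move: (ast_level_unique gen_d al_eq); rewrite ast_d eqxx.
Qed.

Lemma C3_axes : C3 f -> exists (k : 'I_n -> nat) (s : 'I_n -> 'I_r.+1),
  [/\ forall i, (0 < k i)%N, forall i, inV f (unit_expo (2 * k i) i)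
    & forall i, al (s i) = unit_expo (2 * k i) i].
Proof.
move=> c3.
have axis i : exists ks : nat * 'I_r.+1, [/\ (0 < ks.1)%N,
    inV f (unit_expo (2 * ks.1) i) & al ks.2 = unit_expo (2 * ks.1) i].
  have [k [k_gt0 [vx nz]]] := c3 i.
  case: (vertex_conv_gen vx) => [[a [fa /pt_inj ea]]|e0]; last by rewrite e0 eqxx in nz.
  case: (circuit_supp fa) => [a_ast|[j a_al]].
    by case: ast_not_vertex; rewrite -a_ast -ea.
  by exists (k, j); split=> //=; rewrite -a_al ea.
have [g /all_and3 [k_gt0 axisV al_s]] := fin_all_exists axis.
by exists (fun i => (g i).1), (fun i => (g i).2).
Qed.

Section Axes.
Variables (m : 'I_n -> nat) (s : 'I_n -> 'I_r.+1).
Hypothesis m_gt0 : forall i, (0 < m i)%N.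
Hypothesis axis_inV : forall i, inV f (unit_expo (m i) i).
Hypothesis al_s : forall i, al (s i) = unit_expo (m i) i.
Local Notation dual := (axis_dual R m).

Lemma axis_index_inj : injective s.
Proof.
move=> i i' ss; apply/eqP; apply: contraT => ii'.
have : unit_expo (m i) i i = unit_expo (m i') i' i by rewrite -!al_s ss.
by rewrite !ffunE eqxx (negbTE ii') => m0; move: (m_gt0 i); rewrite m0.
Qed.

Lemma dim_le_card_alpha : (n <= r.+1)%N.
Proof. by have := leq_card s axis_index_inj; rewrite !card_ord. Qed.

Lemma dual_al_notin_codom j : j \notin codom s -> dot dual (pt R (al j)) != 1.
Proof.
move=> js; apply/eqP => dual1.
have indep : forall mu : 'I_r.+1 -> R, \sum_j mu j = 0 ->
    \sum_j mu j *: pt R (al j) = 0 -> forall j, mu j = 0.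
  by case: circ => _ [_ [_ [_ [_ [_ []]]]]].
pose t i := (al j i)%:R / (m i)%:R : R.
have t1 : \sum_i t i = 1.
  rewrite -dual1 (dot_pt_axes m_gt0); apply: eq_bigr => i _.
  by rewrite dot_axis_dual_unit // mul1r.
have := affine_indep_codom (q := fun j => pt R (al j)) (t := t) indep js t1.
rewrite (@pt_axes_decomp R _ _ m_gt0).
rewrite (eq_bigr (fun i => t i *: pt R (al (s i)))) ?eqxx //.
by move=> i _; rewrite al_s.
Qed.

Lemma al_codom_not_degenerate i : ~ gem_degenerate f (al (s i)).
Proof. by case=> [[_ nV] _]; apply: nV; rewrite al_s. Qed.

Lemma ast_not_gem_degenerate_full : r = n -> ~ gem_degenerate f ast.
Proof.
move=> rn /gem_degenerate_level [c [d [gen_d d_gt0 ast_d]]].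
have [j js] : exists j, j \notin codom s.
  by apply: exists_notin_codom; rewrite !card_ord rn.
have axes_d i : dot c (pt R (unit_expo (m i) i)) = d.
  by rewrite -al_s (ast_level gen_d ast_d).
apply: (negP (dual_al_notin_codom js)); apply/eqP.
apply: (mulfI (lt0r_neq0 d_gt0)).
by rewrite mulr1 -(dot_pt_axes_eq m_gt0 _ axes_d) (ast_level gen_d ast_d).
Qed.

Lemma al_not_gem_degenerate_full j : r = n -> ~ gem_degenerate f (al j).
Proof.
move=> rn; have [/codomP [i ->]|js] := boolP (j \in codom s).
  exact: al_codom_not_degenerate.
move=> degen; have [[_ nV] _] := degen.
have [c [d [gen_d d_gt0 al_d]]] := gem_degenerate_level degen.
have dual_ge1 : 1 <= dot dual (pt R (al j)).
  rewrite -(ler_pM2l d_gt0) mulr1 -{1}al_d; apply: (dot_pt_axes_le m_gt0) => i.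
  by rewrite -al_s; apply: gen_d; exact: newton_gen_al.
have dual_gt1 : 1 < dot dual (pt R (al j)).
  by rewrite lt_neqAle eq_sym dual_al_notin_codom.
apply: nV; apply: (alpha_vertex (lt_trans ltr01 dual_gt1) erefl) => j' j'j.
have card_r : #|'I_r.+1| = #|'I_n|.+1 by rewrite !card_ord rn.
have /codomP [i ->] := codom_inj_compl1 axis_index_inj card_r js j'j.
by rewrite al_s dot_axis_dual_unit.
Qed.

Lemma gem_regular_full : r = n -> gem_regular f.
Proof.
move=> rn a degen; have [[fa _] _] := degen; move: degen.
case: (circuit_supp fa) => [->|[j ->]]; first exact: ast_not_gem_degenerate_full.
exact: al_not_gem_degenerate_full.
Qed.

Lemma codom_deficient j : r.+1 = n -> j \in codom s.
Proof. by move=> rn; apply: (inj_card_onto axis_index_inj); rewrite !card_ord rn. Qed.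

Lemma dual_al_deficient j : r.+1 = n -> dot dual (pt R (al j)) = 1.
Proof.
move=> rn; have /codomP [i ->] := codom_deficient j rn.
by rewrite al_s dot_axis_dual_unit.
Qed.

Lemma ast_gem_degenerate_deficient : r.+1 = n -> gem_degenerate f ast.
Proof.
move=> rn; have dual_al j := dual_al_deficient j rn.
have gen_le1 : forall y, newton_gen f y -> dot dual y <= 1.
  by apply: newton_gen_le ler01 _ => j; rewrite dual_al.
have ast_N : conv (newton_gen f) (pt R ast) by apply: conv_gen; exact: newton_gen_ast.
split; first by split; [exact: circuit_ast_neq0 | case=> /ast_not_vertex].
exists (fun x => conv (newton_gen f) x /\ dot dual x = 1).
split; last by split; last exact: ast_dot_eq.
split; first exact: face_conv_level gen_le1.
split; first by exists (pt R ast); split; last exact: ast_dot_eq.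
by case=> _; rewrite dot0r => /eqP; rewrite eq_sym oner_eq0.
Qed.

Lemma gem_degenerate_deficient a : r.+1 = n -> gem_degenerate f a <-> a = ast.
Proof.
move=> rn; split=> [degen|->]; last exact: ast_gem_degenerate_deficient.
have [[fa _] _] := degen; case: (circuit_supp fa) => [//|[j a_al]].
have /codomP [i sj] := codom_deficient j rn.
by case: (al_codom_not_degenerate (i := i)); rewrite -sj -a_al.
Qed.

Lemma al_axes_deficient a : r.+1 = n ->
  (exists j, a = al j) <-> exists i, a = unit_expo (m i) i.
Proof.
move=> rn; split=> [[j ->]|[i ->]]; last by exists (s i); rewrite al_s.
by have /codomP [i ->] := codom_deficient j rn; exists i; rewrite al_s.
Qed.

End Axes.

End Circuit.

Theorem mainTheorem5 (R : realFieldType) (n r : nat) (f : mpoly R n)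
    (al : 'I_r.+1 -> expo n) (ast : expo n) :
  is_circuit f al ast -> C3 f ->
  (r.+1 = n \/ r = n) /\
  (r = n -> gem_regular f) /\
  (r.+1 = n ->
     ~ gem_regular f /\
     (forall a, gem_degenerate f a <-> a = ast) /\
     (exists k : 'I_n -> nat, (forall i, (0 < k i)%N) /\
        (forall a, (exists j, a = al j) <-> (exists i, a = unit_expo (2 * k i) i)))).
Proof.
move=> circ /(C3_axes circ) [k [s [k_gt0 axis_inV al_s]]].
pose m i := (2 * k i)%N.
have m_gt0 i : (0 < m i)%N by rewrite muln_gt0 k_gt0.
have := dim_le_card_alpha m_gt0 al_s; have := circuit_le circ.
split; first by lia.
split; first exact: (gem_regular_full circ m_gt0 axis_inV al_s).
move=> rn; split; [|split].
- by move=> reg; apply: (reg ast); exact: (ast_gem_degenerate_deficient circ m_gt0 al_s).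
- by move=> a; exact: (gem_degenerate_deficient circ m_gt0 axis_inV al_s).
- by exists k; split=> // a; exact: (al_axes_deficient m_gt0 al_s).
Qed.
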